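(* Let $A=\mathbb C[t]/(t^2)$ and $\lambda\in P^+$, and let $(\lambda_1^{\max},\lambda_2^{\max})$ be as defined below. Then $W_A(0,\lambda)\cong F_{\lambda_1^{\max},\lambda_2^{\max}}$ as $\mathfrak{sl}_n\otimes A$-modules (and hence as $\mathfrak{sl}_n\otimes\mathbb C[t]$-modules).
   Context: $\mathfrak{sl}_n=\mathfrak n^+\oplus\mathfrak h\oplus\mathfrak n^-$, $I=\{1,\dots,n-1\}$, $R^+$ positive roots, $\omega_1,\dots,\omega_{n-1}$ fundamental weights, $P^+$ dominant integral weights; for $\alpha\in R^+$ fix an $\mathfrak{sl}_2$-triple $e_\alpha,f_\alpha,h_\alpha$ with $f_\alpha\in\mathfrak g_{-\alpha}$. For a commutative algebra $A$, $\mathfrak{sl}_n\otimes A$ has bracket $[x\otimes p,y\otimes q]=[x,y]\otimes pq$. For $A=\mathbb C[t]/(t^2)$, the graded local Weyl module $W_A(0,\lambda)$ is the $\mathfrak{sl}_n\otimes A$-module generated by $w$ subject to $(\mathfrak n^+\otimes A).w=0$, $(\mathfrak h\otimes t).w=0$, $(h\otimes1).w=\lambda(h)w$ for $h\in\mathfrak h$, and $(f_\alpha\otimes1)^{\lambda(h_\alpha)+1}.w=0$ for $\alpha\in R^+$. For $\lambda_1,\lambda_2\in P^+$, $\nu=\lambda_1+\lambda_2$, $F_{\lambda_1,\lambda_2}$ is the $\mathfrak{sl}_n\otimes\mathbb C[t]$-module generated by $\mathbb 1$ subject to $(\mathfrak n^+\otimes\mathbb C[t]).\mathbb 1=0$,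 $(\mathfrak h\otimes t\mathbb C[t]).\mathbb 1=0$, $(\mathfrak n^-\otimes t^2\mathbb C[t]).\mathbb 1=0$, $(h\otimes1).\mathbb 1=\nu(h)\mathbb 1$, and for $\alpha\in R^+$: $(f_\alpha\otimes1)^{\nu(h_\alpha)+1}.\mathbb 1=0$, $(f_\alpha\otimes t)^{\min\{\lambda_1(h_\alpha),\lambda_2(h_\alpha)\}+1}.\mathbb 1=0$; it is annihilated by $\mathfrak{sl}_n\otimes t^2\mathbb C[t]$, hence an $\mathfrak{sl}_n\otimes A$-module. Write $\lambda=\sum_{i\in I}m_i\omega_i$ and let $i_1<\dots<i_k$ be the indices $i$ with $m_i$ odd, $I_{odd}=\{i_1,\dots,i_k\}$. Define $\lambda_1^{\max}=\sum_{s=1}^k\frac{m_{i_s}+(-1)^s}{2}\,\omega_{i_s}+\sum_{i\in I\setminus I_{odd}}\frac{m_i}{2}\,\omega_i$ and $\lambda_2^{\max}=\lambda-\lambda_1^{\max}$. *)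

From HB Require Import structures.
From mathcomp Require Import all_boot all_order all_algebra.
From mathcomp Require Import complex reals.
Set Implicit Arguments. Unset Strict Implicit. Unset Printing Implicit Defensive.
Import Order.TTheory GRing.Theory Num.Theory.
Local Open Scope ring_scope.

(* Conventions.
   sl_n is realised as the traceless n x n matrices over a field C;
   sl_n (x) A, A = C[t]/(t^2), is sl_n (+) sl_n . t, and a representation
   of it on a C-vector space V is given by two maps
     r0 X v = (X (x) 1).v     and     r1 X v = (X (x) t).v
   (only their values on traceless X matter). *)

Record slA_mod (C : fieldType) (n : nat) := SlAMod {
  sm_V :> lmodType C;
  sm_r0 : 'M[C]_n -> sm_V -> sm_V;
  sm_r1 : 'M[C]_n -> sm_V -> sm_V
}.
Arguments sm_r0 {C n} s _ _.
Arguments sm_r1 {C n} s _ _.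

Definition traceless (C : fieldType) (n : nat) (X : 'M[C]_n) := \tr X = 0.

Definition lie_br (C : fieldType) (n : nat) (X Y : 'M[C]_n) := X *m Y - Y *m X.

(* The action of t^a on the second tensor factor: a = 0 <-> 1, a = 1 <-> t. *)
Definition sm_r (C : fieldType) (n : nat) (M : slA_mod C n) (a : bool)
    : 'M[C]_n -> M -> M :=
  if a then sm_r1 M else sm_r0 M.
Arguments sm_r {C n} M a _ _.

(* M is a representation of the Lie algebra sl_n (x) C[t]/(t^2):
   bilinearity and [X (x) t^a, Y (x) t^b] = [X,Y] (x) t^(a+b), t^2 = 0. *)
Definition is_slA_mod (C : fieldType) (n : nat) (M : slA_mod C n) : Prop :=
  [/\ forall (a : bool) (c : C) (X Y : 'M[C]_n) (v : M),
        traceless X -> traceless Y ->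
        sm_r M a (c *: X + Y) v = c *: sm_r M a X v + sm_r M a Y v,
      forall (a : bool) (c : C) (X : 'M[C]_n) (u v : M),
        traceless X -> sm_r M a X (c *: u + v) = c *: sm_r M a X u + sm_r M a X v
    & forall (a b : bool) (X Y : 'M[C]_n) (v : M),
        traceless X -> traceless Y ->
        sm_r M a X (sm_r M b Y v) - sm_r M b Y (sm_r M a X v)
          = (if a && b then 0 else sm_r M (a || b) (lie_br X Y) v)].

Definition is_slA_hom (C : fieldType) (n : nat) (M N : slA_mod C n)
    (f : M -> N) : Prop :=
  [/\ forall (c : C) (u v : M), f (c *: u + v) = c *: f u + f v
    & forall (a : bool) (X : 'M[C]_n) (v : M),
        traceless X -> f (sm_r M a X v) = sm_r N a X (f v)].

Definition is_slA_iso (C : fieldType) (n : nat) (M N : slA_mod C n)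
    (f : M -> N) : Prop := is_slA_hom f /\ bijective f.

(* (M, w) is "the module generated by w subject to the relations Rel":
   it satisfies Rel and is universal among (pointed) modules satisfying Rel. *)
Definition presented (C : fieldType) (n : nat)
    (Rel : forall M : slA_mod C n, M -> Prop) (M : slA_mod C n) (w : M) : Prop :=
  [/\ is_slA_mod M, Rel M w &
      forall (N : slA_mod C n) (w' : N), is_slA_mod N -> Rel N w' ->
        exists f : M -> N,
          [/\ is_slA_hom f, f w = w' &
              forall g : M -> N, is_slA_hom g -> g w = w' -> forall v, g v = f v]].

(* A dominant integral weight lambda = sum_(k=1)^(n-1) m_k omega_k
   is encoded by m : nat -> nat (only m 1, ..., m (n-1) are used).
   Cartan: diagonal traceless matrices; omega_k(diag d) = d_0 + ... + d_(k-1)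
   (0-indexed diagonal entries). *)
Definition wval (C : fieldType) (n : nat) (m : nat -> nat) (H : 'M[C]_n) : C :=
  \sum_(1 <= k < n) (m k)%:R * \sum_(i < n | (i < k)%N) H i i.

(* Positive roots alpha = eps_i - eps_j with i < j (0-indexed),
   e_alpha = E_ij, f_alpha = E_ji, h_alpha = E_ii - E_jj, and
   lambda(h_alpha) = m_(i+1) + ... + m_j. *)
Definition wt (m : nat -> nat) (i j : nat) : nat := \sum_(i.+1 <= k < j.+1) m k.

Definition Ematrix (C : fieldType) (n : nat) (i j : 'I_n) : 'M[C]_n := delta_mx i j.
Arguments Ematrix C {n} i j.

Definition Wrel (C : fieldType) (n : nat) (m : nat -> nat)
    (M : slA_mod C n) (w : M) : Prop :=
  [/\ forall (a : bool) (i j : 'I_n), (i < j)%N -> sm_r M a (Ematrix C i j) w = 0,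
      forall H : 'M[C]_n, is_diag_mx H -> traceless H -> sm_r1 M H w = 0,
      forall H : 'M[C]_n, is_diag_mx H -> traceless H ->
        sm_r0 M H w = wval m H *: w
    & forall (i j : 'I_n), (i < j)%N ->
        iter (wt m i j).+1 (sm_r0 M (Ematrix C j i)) w = 0].

(* Relations of F_{lambda1, lambda2}, read as an sl_n (x) A - module
   (the relation (n^- (x) t^2 C[t]).1 = 0 is automatic there). *)
Definition Frel (C : fieldType) (n : nat) (m1 m2 : nat -> nat)
    (M : slA_mod C n) (w : M) : Prop :=
  [/\ forall (a : bool) (i j : 'I_n), (i < j)%N -> sm_r M a (Ematrix C i j) w = 0,
      forall H : 'M[C]_n, is_diag_mx H -> traceless H -> sm_r1 M H w = 0,
      forall H : 'M[C]_n, is_diag_mx H -> traceless H ->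
        sm_r0 M H w = wval (fun k => m1 k + m2 k) H *: w,
      forall (i j : 'I_n), (i < j)%N ->
        iter (wt (fun k => m1 k + m2 k) i j).+1 (sm_r0 M (Ematrix C j i)) w = 0
    & forall (i j : 'I_n), (i < j)%N ->
        iter (minn (wt m1 i j) (wt m2 i j)).+1 (sm_r1 M (Ematrix C j i)) w = 0].

(* lambda_1^max: if k = i_s is the s-th index (s >= 1) with m_k odd, its
   coefficient is (m_k + (-1)^s)/2; otherwise m_k / 2. *)
Definition odd_rank (m : nat -> nat) (k : nat) : nat :=
  \sum_(1 <= j < k.+1) odd (m j).

Definition lam1max (m : nat -> nat) (k : nat) : nat :=
  if odd (m k) then
    (if odd (odd_rank m k) then ((m k - 1) %/ 2)%N else ((m k + 1) %/ 2)%N)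
  else (m k %/ 2)%N.

Definition lam2max (m : nat -> nat) (k : nat) : nat := (m k - lam1max m k)%N.

From HB Require Import structures.
From mathcomp Require Import all_boot all_order all_algebra.
From mathcomp Require Import complex reals.
From mathcomp Require Import zify ring.
Set Implicit Arguments. Unset Strict Implicit. Unset Printing Implicit Defensive.
Import Order.TTheory GRing.Theory Num.Theory.

(* Both modules are cyclic and their relations differ only in
   (f_a (x) t)^(min(lam1max(h_a), lam2max(h_a)) + 1) w = 0, so by universality
   it suffices to check that these relations already hold in W_A(0, lam).
   There h_a (x) t kills every (f_a (x) t)^s w, which is therefore a highest
   weight vector of weight lam(h_a) - 2s for the sl_2-triple (e_a, f_a, h_a)
   and is killed by a power of f_a; it vanishes as soon as 2s > lam(h_a).
   The choice of lam1max is exactly what makes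
   min(lam1max(h_a), lam2max(h_a)) >= (lam(h_a) - 1) / 2 for every positive
   root a: on prefix sums, 2 lam1max differs from lam by at most one. *)

Lemma lam1max_le m k : lam1max m k <= m k.
Proof. by rewrite /lam1max; case Ho: (odd (m k)); case: (odd (odd_rank m k)) => /=; lia. Qed.

Lemma lam1max_prefix_sum m k :
  2 * \sum_(1 <= l < k.+1) lam1max m l + odd (odd_rank m k)
  = \sum_(1 <= l < k.+1) m l.
Proof.
elim: k => [|k IH]; first by rewrite /odd_rank !big_geq.
have rankS : odd_rank m k.+1 = odd_rank m k + odd (m k.+1).
  by rewrite /odd_rank (@big_nat_recr _ _ _ k.+1 1).
rewrite !(@big_nat_recr _ _ _ k.+1 1) //= [lam1max m k.+1]/lam1max rankS.
move: IH; case Ho: (odd (m k.+1)); case Hr: (odd (odd_rank m k));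
  rewrite /= ?addn1 ?addn0 /= ?Hr /=; lia.
Qed.

Lemma wt_prefix_sum m i j : i < j ->
  \sum_(1 <= l < j.+1) m l = \sum_(1 <= l < i.+1) m l + wt m i j.
Proof. by move=> lij; rewrite /wt -big_cat_nat //; lia. Qed.

Lemma lam_max_add m k : lam1max m k + lam2max m k = m k.
Proof. by rewrite /lam2max subnKC // lam1max_le. Qed.

Lemma wt_lam_max_add m i j : wt (lam1max m) i j + wt (lam2max m) i j = wt m i j.
Proof. by rewrite /wt -big_split; apply: eq_bigr => k _ /=; rewrite lam_max_add. Qed.

Lemma wt_lam_max_sum m i j :
  wt (fun k => lam1max m k + lam2max m k) i j = wt m i j.
Proof. by apply: eq_bigr => k _; rewrite lam_max_add. Qed.

Lemma wval_lam_max_sum (K : fieldType) n m (H : 'M[K]_n) :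
  wval (fun k => lam1max m k + lam2max m k) H = wval m H.
Proof. by apply: eq_bigr => k _; rewrite lam_max_add. Qed.

Lemma wt_lt_double_min_lam_max m i j : i < j ->
  wt m i j < 2 * (minn (wt (lam1max m) i j) (wt (lam2max m) i j)).+1.
Proof.
move=> lij.
have := lam1max_prefix_sum m i; have := lam1max_prefix_sum m j.
have := wt_prefix_sum m lij; have := wt_prefix_sum (lam1max m) lij.
have := wt_lam_max_add m i j.
have := leq_b1 (odd (odd_rank m i)); have := leq_b1 (odd (odd_rank m j)).
lia.
Qed.

Local Open Scope ring_scope.

Lemma iter_commute T (f g : T -> T) : (forall x, f (g x) = g (f x)) ->
  forall N k x, iter N f (iter k g x) = iter k g (iter N f x).
Proof.
move=> fgC N; have fNg x : iter N f (g x) = g (iter N f x).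
  by elim: N x => //= N IH x; rewrite IH fgC.
by elim=> //= k IH x; rewrite fNg IH.
Qed.

Section LinearMap.
Variables (K : fieldType) (V : lmodType K) (g : V -> V).
Hypothesis g_lin : forall c u v, g (c *: u + v) = c *: g u + g v.

Lemma lin_map0 : g 0 = 0.
Proof.
have := g_lin 1 0 0; rewrite !scale1r addr0 => /(congr1 (fun x => x - g 0)).
by rewrite subrr addrK.
Qed.

Lemma lin_mapZ c u : g (c *: u) = c *: g u.
Proof. by have := g_lin c u 0; rewrite addr0 lin_map0 addr0. Qed.

Lemma iter_lin_map0 k : iter k g 0 = 0.
Proof. by elim: k => //= k ->; rewrite lin_map0. Qed.

End LinearMap.

Section Sl2Triple.
Variables (K : numFieldType) (V : lmodType K) (e f h : V -> V).
Hypotheses (e_lin : forall c u v, e (c *: u + v) = c *: e u + e v)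
           (f_lin : forall c u v, f (c *: u + v) = c *: f u + f v).
Hypotheses (ef_comm : forall u, e (f u) - f (e u) = h u)
           (hf_comm : forall u, h (f u) - f (h u) = - 2%:R *: f u).
Variables (u : V) (mu : K).
Hypotheses (eu : e u = 0) (hu : h u = mu *: u).

Lemma sl2_weight_iter k : h (iter k f u) = (mu - (2 * k)%:R) *: iter k f u.
Proof.
elim: k => [|k IH]; first by rewrite /= muln0 subr0.
rewrite iterS -[LHS](subrK (f (h (iter k f u)))) hf_comm IH (lin_mapZ f_lin).
by rewrite -scalerDl mulnS natrD; congr (_ *: _); ring.
Qed.

Lemma sl2_raise_iter k :
  e (iter k.+1 f u) = (k.+1%:R * (mu - k%:R)) *: iter k f u.
Proof.
elim: k => [|k IH].
  by have := ef_comm u; rewrite eu (lin_map0 f_lin) subr0 hu mul1r subr0.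
rewrite iterS -[LHS](subrK (f (e (iter k.+1 f u)))) ef_comm IH (lin_mapZ f_lin).
by rewrite sl2_weight_iter -iterS -scalerDl !mulnS !natrD; congr (_ *: _); ring.
Qed.

(* Descending induction: e f^(k+1) u = (k+1)(mu - k) f^k u, and mu - k != 0. *)
Lemma sl2_highest_weight_eq0 N :
  iter N f u = 0 -> (forall k, (k < N)%N -> mu != k%:R) -> u = 0.
Proof.
move=> fNu mu_neq; suff: forall d, (d <= N)%N -> iter (N - d) f u = 0.
  by move/(_ N (leqnn N)); rewrite subnn.
elim=> [|d IH] ltdN; first by rewrite subn0.
have NdS : (N - d = (N - d.+1).+1)%N by lia.
have := sl2_raise_iter (N - d.+1); rewrite -NdS IH ?(ltnW ltdN) // lin_map0 //.
move/esym/eqP; rewrite scaler_eq0 mulf_eq0 pnatr_eq0 subr_eq0.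
case/orP=> [/orP[|/eqP mu_k]|/eqP //]; first lia.
by have := mu_neq (N - d.+1)%N; rewrite mu_k eqxx; lia.
Qed.

End Sl2Triple.

Section MatrixUnits.
Variables (K : fieldType) (n : nat) (i j : 'I_n).
Hypothesis neq_ij : i != j.

Let coroot := Ematrix K i i - Ematrix K j j.

Lemma lie_br_root : lie_br (Ematrix K i j) (Ematrix K j i) = coroot.
Proof. by rewrite /lie_br /Ematrix !mul_delta_mx. Qed.

Lemma lie_br_coroot : lie_br coroot (Ematrix K j i) = - 2%:R *: Ematrix K j i + 0.
Proof.
rewrite /lie_br /coroot /Ematrix mulmxBl mulmxBr !mul_delta_mx.
rewrite !mul_delta_mx_0 ?(eq_sym j) //.
by rewrite addr0 sub0r subr0 scaleNr scaler_nat mulr2n opprD.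
Qed.

Lemma traceless_root : traceless (Ematrix K i j).
Proof.
rewrite /traceless /Ematrix -[delta_mx i j](mul_delta_mx (R:=K) j i j).
by rewrite mxtrace_mulC mul_delta_mx_0 1?eq_sym ?mxtrace0.
Qed.

Lemma traceless_coroot : traceless coroot.
Proof.
have trE : \tr (delta_mx i i : 'M[K]_n) = \tr (delta_mx j j).
  by rewrite -(mul_delta_mx (R:=K) j i i) mxtrace_mulC mul_delta_mx.
by rewrite /traceless /coroot /Ematrix raddfB /= trE subrr.
Qed.

Lemma diag_coroot : is_diag_mx coroot.
Proof.
apply/is_diag_mxP => a b neq_ab; rewrite /coroot /Ematrix !mxE.
have offdiag k : ((a == k) && (k == b)) = false.
  by apply/negbTE/andP => -[/eqP ak /eqP kb]; rewrite ak kb eqxx in neq_ab.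
by rewrite -[b == i]eq_sym -[b == j]eq_sym !offdiag subrr.
Qed.

End MatrixUnits.

Section WeylModule.
Variables (K : numFieldType) (n : nat) (m : nat -> nat) (M : slA_mod K n) (w : M).
Hypotheses (M_mod : is_slA_mod M) (w_rel : Wrel m w).
Variables (i j : 'I_n).
Hypothesis lt_ij : (i < j)%N.

Let neq_ij : i != j. Proof. by rewrite neq_ltn lt_ij. Qed.
Let neq_ji : j != i. Proof. by rewrite eq_sym. Qed.
Let coroot := Ematrix K i i - Ematrix K j j.
Let e := sm_r0 M (Ematrix K i j).
Let f := sm_r0 M (Ematrix K j i).
Let h := sm_r0 M coroot.
Let ft := sm_r1 M (Ematrix K j i).
Let mu := wval m coroot.

Let tr_e : traceless (Ematrix K i j). Proof. exact: traceless_root. Qed.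
Let tr_f : traceless (Ematrix K j i). Proof. exact: traceless_root. Qed.
Let tr_h : traceless coroot. Proof. exact: traceless_coroot. Qed.

Let sm_r_lin a X : traceless X ->
  forall c u v, sm_r M a X (c *: u + v) = c *: sm_r M a X u + sm_r M a X v.
Proof. by case: M_mod => _ lin _ tX c u v; apply: lin. Qed.

Let sm_r_bracket a b X Y v : traceless X -> traceless Y ->
  sm_r M a X (sm_r M b Y v) - sm_r M b Y (sm_r M a X v)
  = if a && b then 0 else sm_r M (a || b) (lie_br X Y) v.
Proof. by case: M_mod => _ _ br; apply: br. Qed.

Let e_lin : forall c u v, e (c *: u + v) = c *: e u + e v := sm_r_lin false tr_e.
Let f_lin : forall c u v, f (c *: u + v) = c *: f u + f v := sm_r_lin false tr_f.
Let ft_lin : forall c u v, ft (c *: u + v) = c *: ft u + ft v := sm_r_lin true tr_f.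

Let sm_r_zero a v : sm_r M a 0 v = 0.
Proof.
have tr0 : traceless (0 : 'M[K]_n) by rewrite /traceless mxtrace0.
case: M_mod => lin _ _; have := lin a 1 0 0 v tr0 tr0.
by rewrite scale1r addr0 scale1r => /(congr1 (fun x => x - sm_r M a 0 v)); rewrite subrr addrK.
Qed.

Let sm_r_coroot_bracket a v :
  sm_r M a (lie_br coroot (Ematrix K j i)) v = - 2%:R *: sm_r M a (Ematrix K j i) v.
Proof.
have tr0 : traceless (0 : 'M[K]_n) by rewrite /traceless mxtrace0.
by case: M_mod => lin _ _; rewrite lie_br_coroot // lin // sm_r_zero addr0.
Qed.

Let hf_comm v : h (f v) - f (h v) = - 2%:R *: f v.
Proof. by rewrite (sm_r_bracket false false) // sm_r_coroot_bracket. Qed.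

Let ef_comm v : e (f v) - f (e v) = h v.
Proof. by rewrite (sm_r_bracket false false) // lie_br_root. Qed.

Let f_ft_comm v : f (ft v) = ft (f v).
Proof.
apply/eqP; rewrite -subr_eq0; apply/eqP.
by rewrite (sm_r_bracket false true) // /lie_br subrr (sm_r_zero true).
Qed.

Lemma coroot_t_iter_eq0 k : sm_r1 M coroot (iter k ft w) = 0.
Proof.
case: w_rel => _ hw _ _; elim: k => [|k IH] /=; first by rewrite hw ?diag_coroot.
have := sm_r_bracket true true (iter k ft w) tr_h tr_f.
by rewrite /= -/ft IH (lin_map0 ft_lin) subr0.
Qed.

Lemma raise_t_iter_eq0 k : e (iter k ft w) = 0.
Proof.
case: w_rel => ew _ _ _; elim: k => [|k IH] /=; first exact: (ew false).
have := sm_r_bracket false true (iter k ft w) tr_e tr_f.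
by rewrite /= -/ft -/e lie_br_root // coroot_t_iter_eq0 IH (lin_map0 ft_lin) subr0.
Qed.

Lemma weight_t_iter k : h (iter k ft w) = (mu - (2 * k)%:R) *: iter k ft w.
Proof.
case: w_rel => _ _ hw _; elim: k => [|k IH] /=.
  by rewrite muln0 subr0 /h hw ?diag_coroot.
have := sm_r_bracket false true (iter k ft w) tr_h tr_f.
rewrite sm_r_coroot_bracket /= -/ft -/h => brk.
rewrite -[LHS](subrK (ft (h (iter k ft w)))) brk IH (lin_mapZ ft_lin).
by rewrite -scalerDl mulnS natrD; congr (_ *: _); ring.
Qed.

Lemma lower_iter_t_iter_eq0 k : iter (wt m i j).+1 f (iter k ft w) = 0.
Proof.
case: w_rel => _ _ _ fw.
by rewrite (iter_commute f_ft_comm) fw // (iter_lin_map0 ft_lin).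
Qed.

(* lam(h_a) = mu is never computed: either it is one of 0, ..., wt m i j,
   or sl_2 theory applied to w itself already gives w = 0. *)
Lemma Wrel_current_iter_eq0 s : (wt m i j < 2 * s)%N -> iter s ft w = 0.
Proof.
move=> lt_wt_2s.
have sl2 := sl2_highest_weight_eq0 e_lin f_lin ef_comm hf_comm.
case: (boolP [exists k : 'I_(wt m i j).+1, mu == (k : nat)%:R]).
- case/existsP=> k /eqP mu_k.
  apply: (sl2 _ _ (raise_t_iter_eq0 s) (weight_t_iter s) _ (lower_iter_t_iter_eq0 s)) => l _.
  rewrite mu_k subr_eq -natrD eqr_nat; have := ltn_ord k; lia.
- move/existsP=> mu_notin; suff -> : w = 0 by rewrite (iter_lin_map0 ft_lin).
  case: w_rel => ew _ hw fw.
  apply: (sl2 _ _ (ew false i j lt_ij) (hw _ (diag_coroot K i j) tr_h) _ (fw i j lt_ij)).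
  by move=> k lt_k; apply/eqP => mu_k; apply: mu_notin; exists (Ordinal lt_k); apply/eqP.
Qed.

End WeylModule.

Lemma Wrel_Frel_lam_max (K : numFieldType) n m (M : slA_mod K n) (w : M) :
  is_slA_mod M -> Wrel m w -> Frel (lam1max m) (lam2max m) w.
Proof.
move=> M_mod w_rel; have [ew hw1 hw fw] := w_rel; split => //.
- by move=> H dH tH; rewrite wval_lam_max_sum; apply: hw.
- by move=> i j lt_ij; rewrite wt_lam_max_sum; apply: fw.
- move=> i j lt_ij; apply: (Wrel_current_iter_eq0 M_mod w_rel lt_ij).
  exact: wt_lt_double_min_lam_max.
Qed.

Lemma Frel_lam_max_Wrel (K : fieldType) n m (M : slA_mod K n) (w : M) :
  Frel (lam1max m) (lam2max m) w -> Wrel m w.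
Proof.
case=> ew hw1 hw fw _; split => //.
- by move=> H dH tH; rewrite -(wval_lam_max_sum m H); apply: hw.
- by move=> i j lt_ij; rewrite -(wt_lam_max_sum m); apply: fw.
Qed.

Section Presentations.
Variables (K : fieldType) (n : nat).

Lemma comp_slA_hom (M N P : slA_mod K n) (f : M -> N) (g : N -> P) :
  is_slA_hom f -> is_slA_hom g -> is_slA_hom (g \o f).
Proof.
case=> f_lin f_act [g_lin g_act].
by split=> [c u v | a X v tX] /=; rewrite ?f_lin ?g_lin // f_act // g_act.
Qed.

Lemma id_slA_hom (M : slA_mod K n) : is_slA_hom (@id M).
Proof. by []. Qed.

Lemma presented_endo_id (Rel : forall M : slA_mod K n, M -> Prop)
    (M : slA_mod K n) (w : M) (g : M -> M) :
  presented Rel w -> is_slA_hom g -> g w = w -> g =1 id.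
Proof.
case=> M_mod w_rel univ g_hom gw v.
have [f [_ _ f_uniq]] := univ M w M_mod w_rel.
by rewrite (f_uniq g) // [RHS](f_uniq id (id_slA_hom M)).
Qed.

Lemma presented_iso (Rel1 Rel2 : forall M : slA_mod K n, M -> Prop)
    (M N : slA_mod K n) (v : M) (u : N) :
  presented Rel1 v -> presented Rel2 u -> Rel2 M v -> Rel1 N u ->
  exists f : M -> N, is_slA_iso f.
Proof.
move=> pv pu Rel2v Rel1u.
have [M_mod _ univM] := pv; have [N_mod _ univN] := pu.
have [f [f_hom fv _]] := univM N u N_mod Rel1u.
have [g [g_hom gu _]] := univN M v M_mod Rel2v.
exists f; split=> //; exists g.
- by apply: (presented_endo_id pv (comp_slA_hom f_hom g_hom)); rewrite /= fv gu.
- by apply: (presented_endo_id pu (comp_slA_hom g_hom f_hom)); rewrite /= gu fv.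
Qed.

End Presentations.

Theorem lemma9p5 (R : realType) (n : nat) (hn : (2 <= n)%N) (m : nat -> nat)
    (MW : slA_mod R[i] n) (w : MW) (MF : slA_mod R[i] n) (one : MF) :
  presented (Wrel m) w ->
  presented (Frel (lam1max m) (lam2max m)) one ->
  exists f : MW -> MF, is_slA_iso f.
Proof.
move=> pw pone; apply: (presented_iso pw pone).
- by case: pw => MW_mod w_rel _; apply: Wrel_Frel_lam_max.
- by case: pone => _ one_rel _; apply: Frel_lam_max_Wrel.
Qed.
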